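(* For every odd prime $p$, $\gcd\big(S(2),\,2^p+1\big)=1$.
   Context: Let $p$ be an odd prime and $g$ an odd integer which is a primitive root modulo $p$ and modulo $2p$. Define $D_0^{(p)}=\{g^{2k}\bmod p : 0\le k\le \frac{p-1}{2}-1\}$, $D_1^{(p)}=\{g^{2k+1}\bmod p : 0\le k\le \frac{p-1}{2}-1\}$, $D_0^{(2p)}=\{g^{2k}\bmod 2p : 0\le k\le \frac{p-1}{2}-1\}$, $D_1^{(2p)}=\{g^{2k+1}\bmod 2p : 0\le k\le \frac{p-1}{2}-1\}$, viewed as subsets of $\{0,\dots,p-1\}$ resp. $\{0,1,\dots,2p-1\}$. For $j\in\{0,1\}$ let $2D_j^{(p)}=\{2a \bmod 2p : a\in D_j^{(p)}\}$. Let $C_1=D_1^{(2p)}\cup 2D_1^{(p)}\cup\{0\}$ and $C_0=D_0^{(2p)}\cup 2D_0^{(p)}\cup\{p\}$ (these partition $\{0,\dots,2p-1\}$). The binary sequence $s$ of period $2p$ is $s_i=1$ if $i\bmod 2p\in C_1$ and $s_i=0$ otherwise, and $S(2)=\sum_{i=0}^{2p-1}s_i2^i\in\mathbb{Z}$. *)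

From mathcomp Require Import all_boot all_order all_algebra.
Set Implicit Arguments. Unset Strict Implicit. Unset Printing Implicit Defensive.
Import GRing.Theory Num.Theory.
Local Open Scope ring_scope.

Definition primitive_root_mod (n : nat) (g : int) : Prop :=
  coprimez g n /\
  ((g ^+ totient n - 1) %% (n%:Z))%Z = 0 /\
  (forall k : nat, (0 < k < totient n)%N -> ((g ^+ k - 1) %% (n%:Z))%Z != 0).

Definition Dset (n : nat) (g : int) (p j : nat) : seq nat :=
  [seq `|((g ^+ (2 * k + j)%N) %% (n%:Z))%Z|%N | k <- iota 0 (p.-1)./2].

Definition twoDset (g : int) (p j : nat) : seq nat :=
  [seq ((2 * a) %% (2 * p))%N | a <- Dset p g p j].

Definition inC1 (g : int) (p i : nat) : bool :=
  [|| i \in Dset (2 * p) g p 1, i \in twoDset g p 1 | i == 0%N].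

Definition sseq (g : int) (p i : nat) : nat := inC1 g p (i %% (2 * p)).

Definition S2 (g : int) (p : nat) : nat :=
  (\sum_(i < 2 * p) sseq g p i * 2 ^ i)%N.

From mathcomp Require Import all_boot all_order all_algebra finfield.
From mathcomp Require Import zify ring.
Set Implicit Arguments. Unset Strict Implicit. Unset Printing Implicit Defensive.
Import GRing.Theory Num.Theory.
Local Open Scope ring_scope.

(* Let q be a prime dividing 2^p + 1, so that 2^p = -1 in F_q.  Folding together the
   terms i and p + i of S(2) gives S(2) = 1 + e G in F_q, where G = sum_a chi(a) (-2)^a
   is the Gauss sum of the quadratic character chi mod p at the p-th root of unity -2,
   and e = 1 or 0 according as 2 is a non-residue or not: the odd elements of C_1 are
   the odd non-residues, and halving an even element multiplies chi by chi(2).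
   If -2 = 1 in F_q then G = sum_a chi(a) = 0.  Otherwise -2 has order p in F_q^*, so
   p divides q - 1 and, q being odd, q > p + 1; but S(2) = 0 would force G = -1, and
   G^2 = chi(-1) p then gives p^2 = 1 in F_q, which is impossible. *)

Lemma eqn_modMl (p c a b : nat) : prime p -> ~~ (p %| c)%N ->
  (c * a == c * b %[mod p])%N = (a == b %[mod p])%N.
Proof.
move=> p_pr pNc; have cop : coprimez p c by rewrite coprimezE !absz_nat prime_coprime.
have modz_eq (m n : nat) : (m == n %[mod p])%N = (m%:Z == n %[mod p])%Z.
  by rewrite !modz_nat eqz_nat.
by rewrite !modz_eq !eqz_mod_dvd !PoszM -mulrBr Gauss_dvdzr.
Qed.

Lemma reindex_mul_mod (V : nmodType) (p u : nat) (F : nat -> V) :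
  prime p -> ~~ (p %| u)%N ->
  \sum_(a < p) F ((a * u) %% p)%N = \sum_(a < p) F a.
Proof.
move=> p_pr pNu; have p_gt0 := prime_gt0 p_pr.
pose h (a : 'I_p) := Ordinal (ltn_pmod (a * u) p_gt0).
suff h_inj : injective h by rewrite [RHS](reindex_inj h_inj).
move=> a b /(congr1 val) /= /eqP; rewrite ![(_ * u)%N]mulnC eqn_modMl //.
by rewrite !modn_small // => /eqP /val_inj.
Qed.

Definition gauss_sum (R : pzRingType) (p : nat) (chi : nat -> int) (z : R) :=
  \sum_(a < p) (chi a)%:~R * z ^+ a.

Section GaussSum.
Variables (R : comPzRingType) (p : nat) (chi : nat -> int) (z : R).
Hypotheses (p_prime : prime p) (chi_mod : forall a, chi (a %% p)%N = chi a)
  (chi0 : chi 0 = 0) (chiM : forall a b, chi (a * b)%N = chi a * chi b)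
  (chi_sqr : forall a, ~~ (p %| a)%N -> chi a * chi a = 1)
  (chi_sum : \sum_(a < p) chi a = 0)
  (z_p : z ^+ p = 1) (z_sum : \sum_(k < p) z ^+ k = 0).

Lemma sum_expr_mul_mod m :
  \sum_(a < p) z ^+ ((a * m) %% p) = if (p %| m)%N then p%:R else 0.
Proof.
case: ifPn => [p_m | pNm]; last by rewrite (reindex_mul_mod (fun k => z ^+ k)).
under eq_bigr => a _ do rewrite (eqP (dvdn_mull a p_m)) expr0.
by rewrite sumr_const card_ord.
Qed.

Lemma gauss_sum_row (a : 'I_p) :
  (chi a)%:~R * z ^+ a * gauss_sum p chi z
  = \sum_(c < p) (chi c)%:~R * z ^+ ((a * (1 + c)) %% p).
Proof.
have [a0 | a_gt0] := posnP a.
  rewrite a0 chi0 mul0r mul0r.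
  under eq_bigr => c _ do rewrite mod0n expr0 mulr1.
  by rewrite -rmorph_sum chi_sum.
have pNa : ~~ (p %| a)%N by apply/negP => /(dvdn_leq a_gt0); rewrite leqNgt ltn_ord.
rewrite /gauss_sum -(reindex_mul_mod (fun c => (chi c)%:~R * z ^+ c) p_prime pNa).
rewrite big_distrr /=; apply: eq_bigr => c _.
have chi_a2 : (chi a)%:~R * (chi a)%:~R = 1 :> R by rewrite -rmorphM /= chi_sqr.
rewrite chi_mod chiM rmorphM /= !(expr_mod _ z_p) mulnDr muln1 exprD [(c * a)%N]mulnC.
set ca := (chi a)%:~R in chi_a2 *; set cc := (chi c)%:~R.
by rewrite -[RHS]mulr1 -chi_a2; ring.
Qed.

Lemma gauss_sum_sqr : gauss_sum p chi z * gauss_sum p chi z = (chi p.-1)%:~R * p%:R.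
Proof.
have lt_pred : (p.-1 < p)%N by rewrite prednK ?prime_gt0.
rewrite {1}/gauss_sum mulr_suml.
under eq_bigr do rewrite gauss_sum_row.
(* Only c = p - 1 survives: the sum over a vanishes unless p divides 1 + c. *)
rewrite exchange_big /= (bigD1 (Ordinal lt_pred)) //= [X in _ + X]big1 ?addr0.
  by rewrite -big_distrr /= sum_expr_mul_mod add1n prednK ?prime_gt0 ?dvdnn.
move=> c /negbTE neq_c; rewrite -big_distrr /= sum_expr_mul_mod.
case: ifPn => [p_c | _]; last by rewrite mulr0.
suff : nat_of_ord c == p.-1 by rewrite -(inj_eq val_inj) /= in neq_c; rewrite neq_c.
by have := dvdn_leq (ltn0Sn c) p_c; have := ltn_ord c; lia.
Qed.

End GaussSum.

Lemma sum_expr_eq0 (R : idomainType) (x : R) n :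
  x ^+ n = 1 -> x != 1 -> \sum_(k < n) x ^+ k = 0.
Proof.
move=> xn x_neq1; have := subrX1 x n; rewrite xn subrr => /esym/eqP.
by rewrite mulf_eq0 subr_eq0 (negbTE x_neq1) => /eqP.
Qed.

Lemma prime_dvdn_card_pred (F : finFieldType) (x : F) p :
  prime p -> x ^+ p = 1 -> x != 1 -> (p %| #|F|.-1)%N.
Proof.
move=> p_pr xp x_neq1; have [m prim_x m_p] := prim_order_exists (prime_gt0 p_pr) xp.
have m_eq : m = p.
  case/primeP: p_pr => _ /(_ m m_p) /orP[/eqP m1 | /eqP //].
  by move: (prim_order_dvd prim_x 1); rewrite m1 dvdnn expr1 (negbTE x_neq1).
subst m.
have x_neq0 : x != 0.
  by apply: contra_eq_neq xp => ->; rewrite expr0n gtn_eqF ?prime_gt0 // eq_sym oner_neq0.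
rewrite (prim_order_dvd prim_x); apply/eqP/(mulfI x_neq0); rewrite mulr1 -exprS.
by rewrite prednK ?expf_card // (ltnW (card_finNzRing_gt1 F)).
Qed.

Lemma ndvdn_sqr_sub1 p q :
  prime q -> odd p -> odd q -> (1 < p)%N -> (p %| q.-1)%N -> ~~ (q %| p ^ 2 - 1)%N.
Proof.
move=> q_pr p_odd q_odd p_gt1 p_q; have q_gt1 := prime_gt1 q_pr.
have lt_pq : (p.+1 < q)%N.
  case/dvdnP: p_q => -[|[|k]] q_eq; [lia | | nia].
  by move: q_odd; rewrite -(ltn_predK q_gt1) q_eq mul1n /= p_odd.
rewrite (_ : p ^ 2 - 1 = p.-1 * p.+1)%N; last first.
  by case: p p_gt1 {p_odd lt_pq p_q} => // p' _; lia.
by rewrite Euclid_dvdM // negb_or !gtnNdvd //; lia.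
Qed.

Lemma coprime_prime_ndvdn m n : (0 < n)%N ->
  (forall q, prime q -> (q %| n)%N -> ~~ (q %| m)%N) -> coprime m n.
Proof.
move=> n_gt0 q_ndvd; apply: contraT => d_neq1.
have d_gt1 : (1 < gcdn m n)%N by rewrite ltn_neqAle eq_sym d_neq1 gcdn_gt0 n_gt0 orbT.
have d_q := pdiv_dvd (gcdn m n).
move: (q_ndvd _ (pdiv_prime d_gt1) (dvdn_trans d_q (dvdn_gcdr _ _))).
by rewrite (dvdn_trans d_q (dvdn_gcdl _ _)).
Qed.

Lemma absz_modz (g : int) (n : nat) : (0 < n)%N -> (`|(g %% n)%Z|%N)%:Z = (g %% n)%Z.
Proof. by move=> n_gt0; rewrite gez0_abs // modz_ge0 // eqz_nat -lt0n. Qed.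

Lemma modzX_absz (g : int) (n k : nat) : (0 < n)%N ->
  (g ^+ k %% n)%Z = ((`|(g %% n)%Z| ^ k %% n)%N)%:Z.
Proof.
move=> n_gt0; rewrite -modzXm -(absz_modz g n_gt0) -modz_nat.
by rewrite absz_nat -!natz natrX.
Qed.

Lemma Dset_expn (g : int) (n p j : nat) : (0 < n)%N ->
  Dset n g p j = [seq (`|(g %% n)%Z| ^ (2 * k + j) %% n)%N | k <- iota 0 (p.-1)./2].
Proof. by move=> n_gt0; apply: eq_map => k; rewrite modzX_absz. Qed.

Lemma modz_expr_subr1_eq0 (g : int) (n k : nat) : (1 < n)%N ->
  (((g ^+ k - 1) %% n)%Z == 0) = ((`|(g %% n)%Z| ^ k %% n)%N == 1%N).
Proof.
move=> n_gt1; have n_gt0 : (0 < n)%N by apply: ltnW.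
have -> : (((g ^+ k - 1) %% n)%Z == 0) = (n %| g ^+ k - 1)%Z.
  by apply/idP/idP => [/eqP/dvdz_mod0P | /dvdz_mod0P/eqP].
by rewrite -eqz_mod_dvd modzX_absz // (modz_small (m := 1)) ?eqz_nat.
Qed.

Lemma primitive_root_mod_prime (p : nat) (g : int) : prime p -> primitive_root_mod p g ->
  (`|(g %% p)%Z| ^ p.-1 %% p = 1)%N /\
  (forall k, (0 < k < p.-1)%N -> (`|(g %% p)%Z| ^ k %% p != 1)%N).
Proof.
move=> p_pr [_ [g_fermat g_order]]; rewrite totient_prime // in g_fermat g_order.
split => [|k k_range]; last by rewrite -modz_expr_subr1_eq0 ?prime_gt1 // g_order.
by apply/eqP; rewrite -modz_expr_subr1_eq0 ?prime_gt1 // g_fermat.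
Qed.

Lemma absz_modz_dvd (g : int) (n d : nat) : (0 < n)%N -> (d %| n)%N ->
  (`|(g %% n)%Z| %% d)%N = `|(g %% d)%Z|%N.
Proof.
move=> n_gt0 d_n; have d_gt0 : (0 < d)%N by apply: dvdn_gt0 d_n.
have -> : (g %% d)%Z = ((g %% n)%Z %% d)%Z.
  by case/dvdnP: d_n => e ->; rewrite {1}(divz_eq g (e * d)%N) PoszM mulrA modzMDl.
by apply/eqP; rewrite -eqz_nat -modz_nat !absz_modz.
Qed.

Lemma odd_absz_modz (g : int) (n : nat) : (0 < n)%N -> (2 %| n)%N -> ~~ (2 %| g)%Z ->
  odd `|(g %% n)%Z|.
Proof.
move=> n_gt0 two_n; apply: contraR => even_gn.
have two_gn : (2 %| (g %% n))%Z by rewrite -absz_modz // -dvdn2 in even_gn.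
by rewrite (divz_eq g n) rpredD // dvdz_mull.
Qed.

(* [qnr p r a]: [a mod p] lies in D_1^(p) = {r^(2k+1) mod p}, the set of quadratic
   non-residues when [r] is a primitive root modulo [p]. *)
Definition qnr (p r a : nat) : bool :=
  (a %% p)%N \in [seq (r ^ (2 * k + 1) %% p)%N | k <- iota 0 (p.-1)./2].

Definition qchar (p r a : nat) : int :=
  if (p %| a)%N then 0 else if qnr p r a then -1 else 1.

Lemma qnr_mod p r a : qnr p r (a %% p) = qnr p r a.
Proof. by rewrite /qnr modn_mod. Qed.

Lemma qchar_mod p r a : qchar p r (a %% p) = qchar p r a.
Proof. by rewrite /qchar /dvdn !modn_mod qnr_mod. Qed.

Lemma qchar_sqr p r a : ~~ (p %| a)%N -> qchar p r a * qchar p r a = 1.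
Proof. by rewrite /qchar => /negbTE ->; case: qnr. Qed.

Section QuadraticCharacter.
Variables (p r : nat).
Hypotheses (p_prime : prime p) (p_odd : odd p)
  (r_fermat : (r ^ p.-1 %% p = 1)%N)
  (r_order : forall k, (0 < k < p.-1)%N -> (r ^ k %% p != 1)%N).

Let p_gt2 : (2 < p)%N := odd_prime_gt2 p_odd p_prime.

Let odd_pred : odd p.-1 = false.
Proof. by rewrite -subn1 oddB ?prime_gt0 // p_odd. Qed.

Lemma ndvdn_expn k : ~~ (p %| r ^ k)%N.
Proof.
have pNr : ~~ (p %| r)%N.
  apply: contra_eqN r_fermat => p_r; rewrite (eqP (dvdn_exp _ p_r)) //.
  by have := p_gt2; lia.
elim: k => [|k IHk]; first by rewrite expn0 dvdn1; have := p_gt2; lia.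
by rewrite expnS Euclid_dvdM // negb_or pNr.
Qed.

Lemma expn_mod_pred n : (r ^ n %% p = r ^ (n %% p.-1) %% p)%N.
Proof.
rewrite {1}(divn_eq n p.-1) [(_ * p.-1)%N]mulnC expnD expnM -modnMml -modnXm r_fermat.
by rewrite exp1n modnMml mul1n.
Qed.

Lemma dlog_inj i j :
  (i < p.-1)%N -> (j < p.-1)%N -> (r ^ i %% p = r ^ j %% p)%N -> i = j.
Proof.
wlog le_ij : i j / (i <= j)%N => [hw lt_i lt_j eq_ij | lt_i lt_j /eqP eq_ij].
  by case: (leqP i j) => [|/ltnW] le; [apply: hw | symmetry; apply: hw].
have : (r ^ i * 1 == r ^ i * r ^ (j - i) %[mod p])%N by rewrite muln1 -expnD subnKC.
rewrite eqn_modMl ?ndvdn_expn // eq_sym (modn_small (prime_gt1 p_prime)).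
have [/eqP|pos] := posnP (j - i).
  by rewrite subn_eq0 => le_ji _; apply/eqP; rewrite eqn_leq le_ij.
by rewrite (negbTE (r_order _)) // pos (leq_ltn_trans (leq_subr _ _) lt_j).
Qed.

Lemma dlog_exists a :
  ~~ (p %| a)%N -> exists2 k, (k < p.-1)%N & (a %% p = r ^ k %% p)%N.
Proof.
move=> pNa; have p_gt0 := prime_gt0 p_prime.
set s := [seq (r ^ k %% p)%N | k <- iota 0 p.-1].
have s_uniq : uniq s.
  rewrite map_inj_in_uniq ?iota_uniq // => x y; rewrite !mem_iota !add0n.
  by move=> /andP[_ lt_x] /andP[_ lt_y]; apply: dlog_inj.
have mod_units x : ~~ (p %| x)%N -> (x %% p)%N \in iota 1 p.-1.
  by move=> pNx; rewrite mem_iota lt0n pNx add1n prednK // ltn_pmod.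
(* The p - 1 distinct residues r^k exhaust the nonzero residues. *)
have s_sub : {subset s <= iota 1 p.-1}.
  by move=> x /mapP[k _ ->]; rewrite -modn_mod mod_units // /dvdn modn_mod ndvdn_expn.
have s_size : (size (iota 1 p.-1) <= size s)%N by rewrite size_map !size_iota.
have [_ s_eq] := uniq_min_size s_uniq s_sub s_size.
move/mod_units: pNa; rewrite -s_eq => /mapP[k].
by rewrite mem_iota add0n => /andP[_ lt_k] ->; exists k.
Qed.

Lemma qnr_dlog a k : (k < p.-1)%N -> (a %% p = r ^ k %% p)%N -> qnr p r a = odd k.
Proof.
have half_pred : ((p.-1)./2.*2 = p.-1)%N by rewrite halfK odd_pred subn0.
move=> lt_k a_k; rewrite /qnr a_k; apply/mapP/idP => [[m] | odd_k].
  rewrite mem_iota add0n => /andP[_ lt_m] /dlog_inj -> //; first by rewrite oddD oddM.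
  by rewrite -half_pred -mul2n; lia.
exists k./2; last by rewrite -[k in LHS](odd_double_half k) odd_k addnC -mul2n.
rewrite mem_iota add0n -(ltn_double) half_pred /=.
by apply: leq_ltn_trans lt_k; rewrite -{2}(odd_double_half k) leq_addl.
Qed.

Lemma qnr_mul a b :
  ~~ (p %| a)%N -> ~~ (p %| b)%N -> qnr p r (a * b) = qnr p r a (+) qnr p r b.
Proof.
move=> pNa pNb; have [i lt_i a_i] := dlog_exists pNa; have [j lt_j b_j] := dlog_exists pNb.
have pred_gt0 : (0 < p.-1)%N by have := p_gt2; lia.
rewrite (qnr_dlog lt_i a_i) (qnr_dlog lt_j b_j).
rewrite (@qnr_dlog _ ((i + j) %% p.-1)) ?ltn_pmod //.
  by rewrite odd_mod ?oddD ?odd_pred.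
by rewrite -modnMm a_i b_j modnMm -expnD expn_mod_pred.
Qed.

Lemma qnr_gen : qnr p r r.
Proof. by rewrite (@qnr_dlog _ 1) ?expn1 //; have := p_gt2; lia. Qed.

Lemma qnr0 : qnr p r 0 = false.
Proof.
apply/negP; rewrite /qnr mod0n => /mapP[k _] /esym /eqP.
by rewrite -/(dvdn _ _) (negbTE (ndvdn_expn _)).
Qed.

Lemma qnr_half e :
  ~~ odd e -> ~~ (p %| e)%N -> qnr p r e./2 = qnr p r 2 (+) qnr p r e.
Proof.
move=> even_e pNe.
have e_eq : e = (2 * e./2)%N by rewrite -[e in LHS]odd_double_half (negbTE even_e) mul2n.
have pN2 : ~~ (p %| 2)%N by apply/negP => /(dvdn_leq (ltn0Sn 1)); rewrite leqNgt p_gt2.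
rewrite {2}e_eq qnr_mul // ?addbA ?addbb //.
by apply: contra pNe; rewrite {2}e_eq; apply: dvdn_mull.
Qed.

Lemma qchar_mul a b : qchar p r (a * b) = qchar p r a * qchar p r b.
Proof.
rewrite /qchar; have [p_a | pNa] := boolP (p %| a)%N; first by rewrite dvdn_mulr ?mul0r.
have [p_b | pNb] := boolP (p %| b)%N; first by rewrite dvdn_mull ?mulr0.
by rewrite Euclid_dvdM // (negbTE pNa) (negbTE pNb) qnr_mul //; do 2!case: qnr.
Qed.

Lemma qchar_sum : \sum_(a < p) qchar p r a = 0.
Proof.
have pNr : ~~ (p %| r)%N := ndvdn_expn 1.
have := reindex_mul_mod (qchar p r) p_prime pNr.
under eq_bigr do rewrite qchar_mod qchar_mul.
rewrite -mulr_suml; set x := \sum_(i < p) _.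
by rewrite /qchar (negbTE pNr) qnr_gen; lia.
Qed.

Section BinarySequence.
Variable g : int.
Hypotheses (g_odd : ~~ (2 %| g)%Z) (r_def : `|(g %% p)%Z|%N = r).

Lemma mem_Dset_double i : (i < 2 * p)%N -> (i \in Dset (2 * p) g p 1) = odd i && qnr p r i.
Proof.
move=> lt_i; have p_gt0 := prime_gt0 p_prime.
have dp_gt0 : (0 < 2 * p)%N by rewrite muln_gt0.
have r2_mod : (`|(g %% (2 * p)%N)%Z| %% p)%N = r by rewrite absz_modz_dvd ?dvdn_mull.
have r2_odd : odd `|(g %% (2 * p)%N)%Z| by rewrite odd_absz_modz ?dvdn_mulr.
rewrite Dset_expn // /qnr; set r2 := `|_|%N in r2_mod r2_odd *; apply/mapP/andP.
  case=> m m_in ->; rewrite odd_mod ?oddM // oddX r2_odd orbT; split => //.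
  by apply/mapP; exists m; rewrite // modn_dvdm ?dvdn_mull // -r2_mod modnXm.
case=> odd_i /mapP[m m_in i_eq]; exists m => //; apply/eqP.
rewrite -(modn_small lt_i) chinese_remainder ?coprime2n // !modn2 odd_i oddX r2_odd orbT /=.
by rewrite i_eq -r2_mod modnXm.
Qed.

Lemma mem_twoDset i : (i < 2 * p)%N -> (i \in twoDset g p 1) = ~~ odd i && qnr p r i./2.
Proof.
move=> lt_i; have p_gt0 := prime_gt0 p_prime.
have Dset_qnr a : (a < p)%N -> (a \in Dset p g p 1) = qnr p r a.
  by move=> lt_a; rewrite Dset_expn // r_def /qnr modn_small.
have half_lt : (i./2 < p)%N by lia.
rewrite /twoDset; apply/mapP/andP => [[a a_in ->] | [even_i qnr_i]].
  have lt_a : (a < p)%N.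
    by move: a_in; rewrite Dset_expn // => /mapP[k _ ->]; apply: ltn_pmod.
  by rewrite modn_small ?ltn_mul2l // oddM /= -Dset_qnr mul2n doubleK.
exists i./2; first by rewrite Dset_qnr.
have -> : (2 * i./2 = i)%N by rewrite mul2n -[RHS]odd_double_half (negbTE even_i).
by rewrite modn_small.
Qed.

Lemma sseqE i : (i < 2 * p)%N ->
  sseq g p i = [|| odd i && qnr p r i, ~~ odd i && qnr p r i./2 | i == 0%N] :> nat.
Proof.
by move=> lt_i; rewrite /sseq /inC1 (modn_small lt_i) mem_Dset_double // mem_twoDset.
Qed.

Lemma sseq_diff (R : pzRingType) i : (i < p)%N ->
  (sseq g p i)%:R - (sseq g p (p + i))%:R
  = (i == 0%N)%:R + (qnr p r 2)%:R * (qchar p r i)%:~R * (-1) ^+ i :> R.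
Proof.
move=> lt_ip; have p_gt0 := prime_gt0 p_prime.
have [lt_i2 lt_pi2] : (i < 2 * p)%N /\ (p + i < 2 * p)%N by split; lia.
rewrite !sseqE // oddD p_odd.
have [-> | i_gt0] := posnP i.
  rewrite addn0 -[qnr p r p]qnr_mod modnn qnr0 /qchar dvdn0 (gtn_eqF p_gt0) /=.
  by rewrite mulr0z mulr0 mul0r subr0 addr0.
have pNi : ~~ (p %| i)%N by apply/negP => /(dvdn_leq i_gt0); rewrite leqNgt lt_ip.
have pNpi : ~~ (p %| p + i)%N by rewrite dvdn_addr.
have qnr_pi : qnr p r (p + i) = qnr p r i by rewrite -qnr_mod modnDl qnr_mod.
rewrite /qchar (negbTE pNi) addn_eq0 (gtn_eqF p_gt0) add0r -signr_odd.
case: (boolP (odd i)) => [odd_i | even_i] /=;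
  rewrite qnr_half ?oddD ?p_odd ?odd_i // qnr_pi !orbF;
  by case: qnr; case: qnr; rewrite /= ?(mulrN1, mulr1, subr0, sub0r, opprK, subrr, oppr0).
Qed.

Lemma S2_mod (R : comPzRingType) : (2 : R) ^+ p = -1 ->
  (S2 g p)%:R = 1 + (qnr p r 2)%:R * gauss_sum p (qchar p r) (-2 : R).
Proof.
move=> two_p; have p_gt0 := prime_gt0 p_prime.
rewrite /S2 natr_sum mul2n -addnn big_split_ord /= -big_split /=.
transitivity (\sum_(i < p)
  ((nat_of_ord i == 0%N)%:R + (qnr p r 2)%:R * ((qchar p r i)%:~R * (-2) ^+ i)) : R).
  apply: eq_bigr => i _; rewrite !natrM !natrX exprD two_p.
  transitivity (((sseq g p i)%:R - (sseq g p (p + i))%:R) * 2 ^+ i : R).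
    by rewrite mulN1r mulrN mulrBl.
  have -> : (-2 : R) = -1 * 2 by rewrite mulN1r.
  rewrite sseq_diff // exprMn mulrDl !mulrA.
  by case: eqP => [-> | _]; rewrite ?expr0 ?mulr1 ?mul0r.
rewrite big_split /= -big_distrr /=; congr (_ + _).
rewrite (bigD1 (Ordinal p_gt0)) //= big1 ?addr0 // => j /negbTE.
by rewrite -(inj_eq val_inj) /= => ->.
Qed.

Lemma prime_dvdn_pow2S_ndvdn_S2 q : prime q -> (q %| 2 ^ p + 1)%N -> ~~ (q %| S2 g p)%N.
Proof.
move=> q_pr q_dvd.
have natF n : (q %| n)%N = (n%:R == 0 :> 'F_q) := dvdn_pcharf (pchar_Fp q_pr) n.
have two_p : (2 : 'F_q) ^+ p = -1 by move: q_dvd; rewrite natF natrD natrX addr_eq0 => /eqP.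
have q_odd : odd q.
  case: (even_prime q_pr) => [q2 | //]; move: q_dvd.
  by rewrite q2 dvdn2 oddD oddX gtn_eqF ?prime_gt0.
rewrite natF (S2_mod two_p); set G := gauss_sum _ _ _.
have [m2_eq1 | m2_neq1] := eqVneq (-2 : 'F_q) 1.
  rewrite /G /gauss_sum m2_eq1; under eq_bigr do rewrite expr1n mulr1.
  by rewrite -rmorph_sum qchar_sum mulr0 addr0 oner_eq0.
have m2_p : (-2 : 'F_q) ^+ p = 1 by rewrite exprNn two_p -signr_odd p_odd mulrNN mulr1.
have qchar0 : qchar p r 0 = 0 by rewrite /qchar dvdn0.
have G_sqr : G * G = (qchar p r p.-1)%:~R * p%:R.
  exact: gauss_sum_sqr p_prime (@qchar_mod p r) qchar0 qchar_mul (@qchar_sqr p r) qchar_sum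
    m2_p (sum_expr_eq0 m2_p m2_neq1).
have p_q : (p %| q.-1)%N.
  by rewrite -(card_Fp q_pr); apply: prime_dvdn_card_pred m2_p m2_neq1.
case: qnr; rewrite ?mul0r ?addr0 ?oner_eq0 // mul1r addr_eq0 -eqr_oppLR.
apply/negP => /eqP G_eq.
have pNpred : ~~ (p %| p.-1)%N by rewrite gtnNdvd //; have := p_gt2; lia.
have p_sqr : (p%:R : 'F_q) ^+ 2 = 1.
  transitivity ((G * G) ^+ 2); last by rewrite -G_eq mulrNN !mulr1 expr1n.
  by rewrite G_sqr exprMn [_ ^+ 2 in RHS]expr2 -rmorphM /= qchar_sqr // mul1r.
move: (ndvdn_sqr_sub1 q_pr p_odd q_odd (prime_gt1 p_prime) p_q).
by rewrite natF natrB ?expn_gt0 ?prime_gt0 // natrX p_sqr subrr eqxx.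
Qed.

End BinarySequence.

End QuadraticCharacter.

Local Close Scope ring_scope.

Theorem lemma10 (p : nat) (g : int) :
  prime p -> odd p ->
  ~~ (2 %| g)%Z ->
  primitive_root_mod p g -> primitive_root_mod (2 * p) g ->
  gcdn (S2 g p) (2 ^ p + 1) = 1%N.
Proof.
move=> p_prime p_odd g_odd g_prim _.
have [r_fermat r_order] := primitive_root_mod_prime p_prime g_prim.
apply/eqP; apply: coprime_prime_ndvdn; first by rewrite addn1.
move=> q; exact: (prime_dvdn_pow2S_ndvdn_S2 p_prime p_odd r_fermat r_order g_odd (erefl _)).
Qed.
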